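(* Let $\mathcal{G}=(\mathcal{V},\mathcal{E})$ be an undirected graph with $|\mathcal{N}_i|\ge (d+1)F+1$ for every $i\in\mathcal{V}$, and let $i\in\mathcal{B}$ be a benign agent updating by the resilient multi-dimensional consensus algorithm described in the context. Fix a time $k$, let $p=(k\bmod d)+1$, and let $\underline{m}_p(k)$ and $\overline{M}_p(k)$ be respectively the $(dF+1)$-th smallest and the $(dF+1)$-th largest of the values $e_p^{T}x$, $x\in\mathcal{X}^i(k)$ (counted with multiplicity). Then $y^i_p(k)\le\underline{m}_p(k)$ and $z^i_p(k)\ge\overline{M}_p(k)$.
   Context: $\mathcal{G}=(\mathcal{V},\mathcal{E})$ is undirected, $\mathcal{N}_i=\{j\in\mathcal{V}: e_{ij}\in\mathcal{E}\}$; $\mathcal{B}\subset\mathcal{V}$ is the set of benign agents; the other agents may send arbitrary values. $e_p$ is the $p$-th canonical basis vector of $\mathbb{R}^d$ and $v_p$ denotes the $p$-th entry of a vector $v$. For a finite multiset $\mathcal{A}\subset\mathbb{R}^d$ of cardinality $m$ (counted with multiplicity) and integer $0\le n\le m$, let $\mathcal{S}(\mathcal{A},n)$ be the collection of all sub-multisets of $\mathcal{A}$ of cardinality $m-n$, and $\varPsi(\mathcal{A},n)=\bigcap_{S\in\mathcal{S}(\mathcal{A},n)}\mathrm{Conv}(S)$. Algorithm: each benign agent $i$ has state $x^i(k)\in\mathbb{R}^d$. At each time $k$: (1) $i$ collects in the multiset $\mathcal{X}^i(k)$ the values received from all $j\in\mathcal{N}_i$; (2) with $p=(k \bmod d)+1$,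 it sorts the points of $\mathcal{X}^i(k)$ in ascending order of their $p$-th entries; (3) $\mathcal{Y}^i(k)$ is the multiset of the first $(d+1)F+1$ sorted points, and $y^i(k)$ is any point of $\varPsi(\mathcal{Y}^i(k),F)$; (4) $\mathcal{Z}^i(k)$ is the multiset of the last $(d+1)F+1$ sorted points, and $z^i(k)$ is any point of $\varPsi(\mathcal{Z}^i(k),F)$; (5) $x^i(k+1)=\frac{1}{3}\big(x^i(k)+y^i(k)+z^i(k)\big)$. *)

From HB Require Import structures.
From mathcomp Require Import all_boot all_order all_algebra.
From mathcomp Require Import reals.
Set Implicit Arguments. Unset Strict Implicit. Unset Printing Implicit Defensive.
Import Order.TTheory GRing.Theory Num.Theory.
Local Open Scope ring_scope.

Section RMC.
Variables (R : realType) (d : nat).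

(* points of R^d are row vectors; the p-th entry of v is  v 0 p  (0-based p) *)
Notation pt := 'rV[R]_d.

Definition conv (S : seq pt) (v : pt) : Prop :=
  exists w : nat -> R,
    (forall j, 0 <= w j) /\
    \sum_(j < size S) w j = 1 /\
    v = \sum_(j < size S) w j *: S`_j.

(* Psi(A,n): intersection of Conv(S) over all sub-multisets S of A of
   cardinality |A| - n; sub-multisets are represented by masks. *)
Definition Psi (A : seq pt) (n : nat) (v : pt) : Prop :=
  forall b : bitseq, size b = size A -> count id b = (size A - n)%N ->
    conv (mask b A) v.

(* 0-based coordinate index p-1 = k mod d used at time k *)
Definition coord_idx (hd : (0 < d)%N) (k : nat) : 'I_d :=
  Ordinal (ltn_pmod k hd).

(* one step (2)-(4) of the algorithm for a benign agent: X is the received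
   multiset, s a sorting of X by the p-th entries, y in Psi(Y,F), z in Psi(Z,F) *)
Definition rmc_step (F : nat) (p : 'I_d) (X s : seq pt) (y z : pt) : Prop :=
  let n := ((d.+1 * F).+1)%N in
  [/\ perm_eq s X,
      sorted (fun a b : pt => a 0 p <= b 0 p) s,
      Psi (take n s) F y &
      Psi (drop (size s - n) s) F z].

(* (r+1)-th smallest value (0-based r) of the p-th entries of X *)
Definition kth_smallest (p : 'I_d) (X : seq pt) (r : nat) : R :=
  nth 0 (sort <=%R [seq (v : pt) 0 p | v <- X]) r.

(* (r+1)-th largest value (0-based r) of the p-th entries of X *)
Definition kth_largest (p : 'I_d) (X : seq pt) (r : nat) : R :=
  nth 0 (sort <=%R [seq (v : pt) 0 p | v <- X]) (size X - r.+1).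

End RMC.

(* X^i(k): values received by i at time k from all neighbours j (adj i j);
   msg k j i is the value sent by j to i at time k *)
Definition received (R : realType) (d : nat) (V : finType) (adj : rel V)
  (msg : nat -> V -> V -> 'rV[R]_d) (k : nat) (i : V) : seq 'rV[R]_d :=
  [seq msg k j i | j <- enum (adj i)].

(* [Y^i(k)] has [(d+1)F+1] points, so its first [dF+1] sorted points form one
   of the sub-multisets of cardinality [|Y^i(k)| - F] defining [Psi], and
   [y^i(k)] lies in their convex hull.  Each of these points has [p]-th entry
   at most the [(dF+1)]-th smallest one, and convex combinations preserve this
   bound.  Symmetrically, [z^i(k)] lies in the hull of the last [dF+1] points. *)
From HB Require Import structures.
From mathcomp Require Import all_boot all_order all_algebra.
From mathcomp Require Import reals.
From mathcomp Require Import zify.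
Import Order.TTheory GRing.Theory Num.Theory.

Set Implicit Arguments.
Unset Strict Implicit.
Unset Printing Implicit Defensive.

Lemma takeEmask_size (T : Type) (i : nat) (s : seq T) : i <= size s ->
  take i s = mask (nseq i true ++ nseq (size s - i) false) s.
Proof.
move=> le_i_s; rewrite -{3}(cat_take_drop i s).
by rewrite mask_cat ?size_nseq ?size_takel // mask_true ?size_takel // mask_false cats0.
Qed.

Section SortedOrderStatistics.
Variables (disp : Order.disp_t) (T : orderType disp).
Local Open Scope order_scope.

Lemma sort_map_sorted_perm (U : eqType) (f : U -> T) (s X : seq U) :
  perm_eq s X -> sorted (relpre f <=%O) s -> sort <=%O (map f X) = map f s.
Proof.
move=> perm_sX sorted_s.
by rewrite -(perm_sort_leP _ _ (perm_map f perm_sX)) sort_le_id // sorted_map.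
Qed.

Lemma sorted_take_le_nth (x0 : T) (t : seq T) (m : nat) :
  sorted <=%O t -> (m < size t)%N -> {in take m.+1 t, forall a, a <= nth x0 t m}.
Proof.
move=> sorted_t lt_m_t a /(nthP x0)[j]; rewrite size_takel // => lt_j_m <-.
rewrite nth_take //; apply: le_sorted_leq_nth; rewrite ?inE //.
exact: leq_trans lt_j_m lt_m_t.
Qed.

Lemma sorted_drop_ge_nth (x0 : T) (t : seq T) (m : nat) :
  sorted <=%O t -> {in drop m t, forall a, nth x0 t m <= a}.
Proof.
move=> sorted_t a /(nthP x0)[j]; rewrite size_drop ltn_subRL => lt_mj <-.
rewrite nth_drop; apply: le_sorted_leq_nth; rewrite ?inE ?leq_addr //.
exact: leq_ltn_trans (leq_addr j m) lt_mj.
Qed.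

End SortedOrderStatistics.

Local Open Scope ring_scope.

Section ResilientStep.
Variables (R : realType) (d : nat).
Implicit Types (S : seq 'rV[R]_d) (v : 'rV[R]_d) (p : 'I_d).

Lemma conv_coord_le S v p (c : R) :
  conv S v -> {in S, forall u : 'rV[R]_d, u 0 p <= c} -> v 0 p <= c.
Proof.
move=> [w [w_ge0 [w_sum1 ->]]] le_S_c; rewrite summxE.
apply: (@le_trans _ _ (\sum_(j < size S) w j * c)); last first.
  by rewrite -mulr_suml w_sum1 mul1r.
by apply: ler_sum => j _; rewrite mxE ler_wpM2l ?le_S_c ?mem_nth.
Qed.

Lemma conv_coord_ge S v p (c : R) :
  conv S v -> {in S, forall u : 'rV[R]_d, c <= u 0 p} -> c <= v 0 p.
Proof.
move=> [w [w_ge0 [w_sum1 ->]]] ge_S_c; rewrite summxE.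
apply: (@le_trans _ _ (\sum_(j < size S) w j * c)).
  by rewrite -mulr_suml w_sum1 mul1r.
by apply: ler_sum => j _; rewrite mxE ler_wpM2l ?ge_S_c ?mem_nth.
Qed.

Lemma Psi_conv_take (A : seq 'rV[R]_d) (n : nat) v :
  (n <= size A)%N -> Psi A n v -> conv (take (size A - n) A) v.
Proof.
move=> le_n_A PsiA; rewrite takeEmask_size ?leq_subr //.
apply: PsiA; rewrite ?size_cat ?count_cat ?size_nseq ?count_nseq /=; lia.
Qed.

Lemma Psi_conv_drop (A : seq 'rV[R]_d) (n : nat) v :
  (n <= size A)%N -> Psi A n v -> conv (drop n A) v.
Proof.
move=> le_n_A PsiA; rewrite dropEmask.
apply: PsiA; rewrite ?size_cat ?count_cat ?size_nseq ?count_nseq /=; lia.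
Qed.

Variables (F : nat) (p : 'I_d) (X s : seq 'rV[R]_d) (y z : 'rV[R]_d).
Hypotheses (large_X : ((d.+1 * F).+1 <= size X)%N)
           (step : rmc_step F p X s y z).

Let t := [seq v 0 p | v <- s].

Let size_s : size s = size X.
Proof. by case: step => perm_sX *; apply: perm_size. Qed.

Let sorted_t : sorted <=%R t.
Proof. by case: step => _ sorted_s *; rewrite sorted_map. Qed.

Let sort_X : sort <=%R [seq v 0 p | v <- X] = t.
Proof. by case: step => perm_sX sorted_s *; apply: sort_map_sorted_perm. Qed.

Lemma rmc_step_y_le : y 0 p <= kth_smallest p X (d * F).
Proof.
case: step => _ _ PsiY _; rewrite /kth_smallest sort_X.
set n := (d.+1 * F).+1 in PsiY.
have size_Y : size (take n s) = n by rewrite size_takel // size_s.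
have le_F_Y : (F <= size (take n s))%N by rewrite size_Y /n; lia.
have := Psi_conv_take le_F_Y PsiY; rewrite size_Y take_takel ?leq_subr //.
have -> : (n - F = (d * F).+1)%N by rewrite /n mulSn; lia.
move=> convY; apply: (conv_coord_le convY) => u u_in.
apply: sorted_take_le_nth => //.
  by rewrite size_map size_s; lia.
by rewrite -map_take; apply: map_f.
Qed.

Lemma rmc_step_z_ge : kth_largest p X (d * F) <= z 0 p.
Proof.
case: step => _ _ _ PsiZ; rewrite /kth_largest sort_X.
set n := (d.+1 * F).+1 in PsiZ.
have le_F_Z : (F <= size (drop (size s - n) s))%N by rewrite size_drop /n; lia.
have := Psi_conv_drop le_F_Z PsiZ; rewrite drop_drop.
have -> : (F + (size s - n) = size X - (d * F).+1)%N by rewrite /n mulSn; lia.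
move=> convZ; apply: (conv_coord_ge convZ) => u u_in.
by apply: sorted_drop_ge_nth; rewrite // -map_drop; apply: map_f.
Qed.

End ResilientStep.

Theorem corollary2 (R : realType) (V : finType) (adj : rel V)
  (adj_sym : symmetric adj) (B : {set V}) (d F : nat) (hd : (0 < d)%N)
  (hN : forall i : V, ((d.+1 * F).+1 <= #|[set j | adj i j]|)%N)
  (x : nat -> V -> 'rV[R]_d) (msg : nat -> V -> V -> 'rV[R]_d)
  (hmsg : forall (k : nat) (j i : V), j \in B -> msg k j i = x k j)
  (s : nat -> V -> seq 'rV[R]_d) (y z : nat -> V -> 'rV[R]_d)
  (halg : forall (k : nat) (i : V), i \in B ->
     rmc_step F (coord_idx hd k) (received adj msg k i) (s k i) (y k i) (z k i)
     /\ x k.+1 i = 3%:R^-1 *: (x k i + y k i + z k i))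
  (i : V) (hi : i \in B) (k : nat) :
  y k i 0 (coord_idx hd k)
    <= kth_smallest (coord_idx hd k) (received adj msg k i) (d * F)
  /\ kth_largest (coord_idx hd k) (received adj msg k i) (d * F)
    <= z k i 0 (coord_idx hd k).
Proof.
have step := (halg k i hi).1.
have large_X : ((d.+1 * F).+1 <= size (received adj msg k i))%N.
  by rewrite /received size_map -cardE -cardsE hN.
by split; [apply: rmc_step_y_le step | apply: rmc_step_z_ge step].
Qed.
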